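(* Let $\mathbb{K}$ be a field with $1+1\neq0$. Any two non-zero symmetric $2\times2$ matrices $P,Q$ over $\mathbb{K}$ with the same determinant are geometrically equivalent over $\mathbb{K}$, i.e. there is $A\in\mathrm{GL}_2(\mathbb{K})$ with $P=A^tQA/|A|$.
   Context: $|A|$ denotes the determinant of $A$ and $\mathrm{GL}_2(\mathbb{K})$ the group of invertible $2\times2$ matrices over $\mathbb{K}$. *)

From HB Require Import structures.
From mathcomp Require Import all_boot all_order all_algebra.
Set Implicit Arguments. Unset Strict Implicit. Unset Printing Implicit Defensive.
Import GRing.Theory.
Local Open Scope ring_scope.

Definition geom_equiv (K : fieldType) (P Q : 'M[K]_2) : Prop :=
  exists A : 'M[K]_2, A \in unitmx /\ P = (\det A)^-1 *: (A^T *m Q *m A).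

(* Geometric equivalence is an equivalence relation, so it suffices to bring
   every non-zero symmetric S = [[a, b], [b, c]] to the normal form
   diag(-1, -|S|).  If a != 0, completing the square with C = [[1, b], [0, -a]]
   gives C^t S C = diag(a, a |S|) with |C| = -a; the case c != 0 is symmetric,
   and if a = c = 0 then C = [[1, b], [1, -b]] gives C^t S C = diag(2b, -2b^3)
   with |C| = -2b, which is where 1 + 1 != 0 is needed. *)

From HB Require Import structures.
From mathcomp Require Import all_boot all_order all_algebra.
From mathcomp Require Import ring.
Import GRing.Theory.
Local Open Scope ring_scope.
Set Implicit Arguments. Unset Strict Implicit.

Section GeomEquiv.
Variable K : fieldType.
Implicit Types P Q R A : 'M[K]_2.

Lemma geom_equivW P Q A :
  \det A != 0 -> P = (\det A)^-1 *: (A^T *m Q *m A) -> geom_equiv P Q.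
Proof. by move=> dA ->; exists A; rewrite unitmxE unitfE. Qed.

Lemma geom_equiv_sym P Q : geom_equiv P Q -> geom_equiv Q P.
Proof.
move=> [A [uA ->]]; have dA : \det A != 0 by rewrite -unitfE -unitmxE.
apply: (@geom_equivW _ _ (invmx A)); first by rewrite det_inv invr_eq0.
rewrite det_inv invrK -scalemxAr -scalemxAl scalerA mulfV // scale1r.
by rewrite !mulmxA -trmx_mul mulmxV // trmx1 mul1mx -mulmxA mulmxV // mulmx1.
Qed.

Lemma geom_equiv_trans P Q R :
  geom_equiv P Q -> geom_equiv Q R -> geom_equiv P R.
Proof.
move=> [A [uA ->]] [B [uB ->]].
exists (B *m A); split; first by rewrite unitmx_mul uB uA.
rewrite det_mulmx trmx_mul -scalemxAr -scalemxAl scalerA !mulmxA.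
by rewrite invfM mulrC.
Qed.

End GeomEquiv.

Section Matrix2.
Variable K : fieldType.

Definition mx22 (a b c d : K) : 'M[K]_2 :=
  \matrix_(i, j) if i == 0 then (if j == 0 then a else b)
                 else (if j == 0 then c else d).

Lemma mx22E (A : 'M[K]_2) : A = mx22 (A 0 0) (A 0 1) (A 1 0) (A 1 1).
Proof.
apply/matrixP => i j; rewrite !mxE.
by case: i => [[|[|//]] Hi]; case: j => [[|[|//]] Hj] /=; congr (A _ _); apply: val_inj.
Qed.

Lemma sym_mx22E (S : 'M[K]_2) :
  S^T = S -> S = mx22 (S 0 0) (S 0 1) (S 0 1) (S 1 1).
Proof. by move=> sS; rewrite {1}(mx22E S) -{3}sS mxE. Qed.

Lemma det_mx22 a b c d : \det (mx22 a b c d) = a * d - b * c.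
Proof.
rewrite (expand_det_row _ 0) !big_ord_recl big_ord0 /cofactor !det_mx11 !mxE /=.
by rewrite !expr0 expr1; ring.
Qed.

Lemma mul_mx22 a b c d a' b' c' d' :
  mx22 a b c d *m mx22 a' b' c' d' =
  mx22 (a * a' + b * c') (a * b' + b * d') (c * a' + d * c') (c * b' + d * d').
Proof.
apply/matrixP => i j; rewrite !mxE !big_ord_recl big_ord0 !mxE /=.
by case: i => [[|[|//]] Hi]; case: j => [[|[|//]] Hj] /=; ring.
Qed.

Lemma tr_mx22 a b c d : (mx22 a b c d)^T = mx22 a c b d.
Proof.
apply/matrixP => i j; rewrite !mxE.
by case: i => [[|[|//]] Hi]; case: j => [[|[|//]] Hj].
Qed.

Lemma scale_mx22 k a b c d : k *: mx22 a b c d = mx22 (k * a) (k * b) (k * c) (k * d).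
Proof.
apply/matrixP => i j; rewrite !mxE.
by case: i => [[|[|//]] Hi]; case: j => [[|[|//]] Hj].
Qed.

Lemma mx22_eq0 a b c d :
  (mx22 a b c d == 0) = [&& a == 0, b == 0, c == 0 & d == 0].
Proof.
apply/eqP/and4P => [/matrixP E | [/eqP-> /eqP-> /eqP-> /eqP->]].
  by move: (E 0 0) (E 0 1) (E 1 0) (E 1 1); rewrite !mxE /= => -> -> -> ->.
by apply/matrixP => i j; rewrite !mxE; case: ifP; case: ifP.
Qed.

End Matrix2.

Section NormalForm.
Variables (K : fieldType) (two_neq0 : (1 + 1 : K) != 0).

Definition geom_normal (d : K) : 'M[K]_2 := mx22 (-1) 0 0 (- d).

Lemma geom_equiv_normal_mx22 a b c : mx22 a b b c != 0 ->
  geom_equiv (geom_normal (a * c - b * b)) (mx22 a b b c).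
Proof.
move=> S_neq0; rewrite /geom_normal.
have [a0|a_neq0] := eqVneq a 0; last first.
  apply: (@geom_equivW _ _ _ (mx22 1 b 0 (- a))).
    by rewrite det_mx22 mulr0 subr0 mul1r oppr_eq0.
  rewrite det_mx22 tr_mx22 !mul_mx22 scale_mx22.
  by congr mx22; field; rewrite oppr_eq0.
have [c0|c_neq0] := eqVneq c 0; last first.
  apply: (@geom_equivW _ _ _ (mx22 0 c 1 (- b))).
    by rewrite det_mx22 mul0r mulr1 sub0r oppr_eq0.
  rewrite det_mx22 tr_mx22 !mul_mx22 scale_mx22.
  by congr mx22; field; rewrite oppr_eq0.
have b_neq0 : b != 0.
  by apply: contra S_neq0 => /eqP b0; rewrite mx22_eq0 a0 b0 c0 eqxx.
subst a c.
have bb_neq0 : b + b != 0 by rewrite -[b]mulr1 -mulrDr mulf_neq0.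
apply: (@geom_equivW _ _ _ (mx22 1 b 1 (- b))).
  by rewrite det_mx22 mul1r mulr1 -opprD oppr_eq0.
rewrite det_mx22 tr_mx22 !mul_mx22 scale_mx22.
by congr mx22; field; rewrite -opprD oppr_eq0.
Qed.

Lemma geom_equiv_normal (S : 'M[K]_2) : S^T = S -> S != 0 ->
  geom_equiv (geom_normal (\det S)) S.
Proof.
move=> sS; rewrite (sym_mx22E sS) det_mx22.
exact: geom_equiv_normal_mx22.
Qed.

End NormalForm.

Unset Implicit Arguments.
Theorem theorem5p12 (K : fieldType) (h2 : (1 + 1 : K) != 0)
  (P Q : 'M[K]_2) (hPs : P^T = P) (hQs : Q^T = Q)
  (hP0 : P != 0) (hQ0 : Q != 0) (hdet : \det P = \det Q) :
  geom_equiv P Q.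
Proof.
apply: (@geom_equiv_trans _ _ (geom_normal (\det P))).
  exact: geom_equiv_sym (geom_equiv_normal h2 hPs hP0).
by rewrite hdet; apply: geom_equiv_normal.
Qed.
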